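(* For every natural number $n \geq 0$, $$G_n = \sum_{1 \leq \ell \leq k \leq n} (-1)^{k-1} (\ell-1)!\,(k-\ell)!\, S(n,k).$$ In particular, $G_n$ is an integer for every $n \in \mathbb{N}$.
   Context: The Genocchi numbers $G_n$ ($n \in \mathbb{N}$) are defined by the exponential generating function $\frac{2x}{e^x+1} = \sum_{n=0}^{\infty} G_n \frac{x^n}{n!}$. The Stirling numbers of the second kind $S(n,k)$ ($0 \le k \le n$) are the integers defined by the polynomial identity $X^n = \sum_{k=0}^{n} S(n,k)\, X(X-1)\cdots(X-k+1)$. (For $n=0$ the sum is empty and the claim reads $G_0 = 0$.) *)

From mathcomp Require Import all_boot all_order all_algebra.
Set Implicit Arguments. Unset Strict Implicit. Unset Printing Implicit Defensive.
Import Order.TTheory GRing.Theory Num.Theory.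
Local Open Scope ring_scope.

(* Formal power series over rat are represented by their coefficient
   sequences nat -> rat; product is the Cauchy product. *)
Definition fps_mul (f g : nat -> rat) (n : nat) : rat :=
  \sum_(i < n.+1) f i * g (n - i)%N.

Definition egf (a : nat -> rat) (n : nat) : rat := a n / (n`!)%:R.

Definition exp_plus_one (n : nat) : rat := 1 / (n`!)%:R + (n == 0%N)%:R.

Definition two_x (n : nat) : rat := if n == 1%N then 2 else 0.

(* G is the sequence of Genocchi numbers:
   2x/(e^x+1) = sum G_n x^n/n!, i.e. (e^x+1) * egf G = 2x as formal power
   series (e^x + 1 has invertible constant term 2). *)
Definition is_genocchi (G : nat -> rat) : Prop :=
  forall n, fps_mul exp_plus_one (egf G) n = two_x n.

Definition falling (k : nat) : {poly int} := \prod_(i < k) ('X - (i%:R)%:P).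

Definition is_stirling2 (S : nat -> nat -> int) : Prop :=
  forall n, 'X^n = \sum_(k < n.+1) S n k *: falling k.

Definition genocchi_formula (S : nat -> nat -> int) (n : nat) : int :=
  \sum_(1 <= k < n.+1) \sum_(1 <= l < k.+1)
     (-1) ^+ (k - 1)%N * ((l - 1)`!)%:Z * ((k - l)`!)%:Z * S n k.

From mathcomp Require Import all_boot all_order all_algebra ring zify.
Import Order.TTheory GRing.Theory Num.Theory.
Set Implicit Arguments.
Unset Strict Implicit.
Unset Printing Implicit Defensive.
Local Open Scope ring_scope.

(* Let L be the umbral functional on Z[X] with L(X^n) = F_n, where F_n is the
   right-hand side of the formula.  Since X^n = sum_k S(n,k) (X)_k and S is
   unitriangular, L((X)_k) = c_k, the inner sum over l ([genocchi_coef k]).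
   An elementary identity for c_k shows L(f(X+1)) + L(f) = 2 f'(0) for every
   falling factorial f, hence for every polynomial; for f = X^n this is the
   recurrence sum_i C(n,i) F_i + F_n = 2[n = 1], which is equivalent to
   (e^x + 1) sum_n F_n x^n/n! = 2x and determines the sequence uniquely. *)

Lemma fallingS k : falling k.+1 = falling k * ('X - (k%:R)%:P).
Proof. by rewrite /falling big_ord_recr. Qed.

Lemma size_falling k : size (falling k) = k.+1.
Proof. by rewrite /falling size_prod_XsubC /index_enum -enumT size_enum_ord. Qed.

Lemma falling_monic k : falling k \is monic.
Proof. exact: monic_prod_XsubC. Qed.

Lemma coef_falling_ge k i : (k <= i)%N -> (falling k)`_i = (i == k)%:R.
Proof.
rewrite leq_eqVlt => /orP[/eqP->|lt_ki]; last first.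
  by rewrite nth_default ?size_falling // gtn_eqF.
by rewrite eqxx -(eqP (falling_monic i)) lead_coefE size_falling.
Qed.

Lemma coef0_falling k : (falling k.+1)`_0 = 0.
Proof.
elim: k => [|k IHk]; rewrite fallingS mulrBr coefB coefMX coefMC /=.
  by rewrite /falling big_ord0 mulr0 subr0.
by rewrite IHk mul0r subr0.
Qed.

Lemma coef1_falling k : (falling k.+1)`_1 = (-1) ^+ k * (k`!)%:R.
Proof.
elim: k => [|k IHk].
  by rewrite fallingS /falling big_ord0 mul1r coefB coefX coefC.
rewrite fallingS mulrBr coefB coefMX coefMC /= coef0_falling IHk.
by rewrite factS natrM exprS; ring.
Qed.

Lemma falling_comp_XaddC1 k :
  falling k.+1 \Po ('X + 1) = falling k.+1 + k.+1%:R *: falling k.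
Proof.
elim: k => [|k IHk].
  by rewrite fallingS /falling big_ord0 mul1r subr0 comp_polyX scale1r addrC.
rewrite fallingS comp_polyM IHk comp_polyB comp_polyX comp_polyC.
by rewrite fallingS -!mul_polyC !polyC_natr; ring.
Qed.

Definition fact_conv (k : nat) : nat := (\sum_(j < k) j`! * (k.-1 - j)`!)%N.

Lemma fact_conv_rec m :
  (2 * fact_conv m.+2 = m.+2 * fact_conv m.+1 + 2 * m.+1`!)%N.
Proof.
have splitr : fact_conv m.+2 = (\sum_(j < m.+1) j`! * (m.+1 - j)`! + m.+1`!)%N.
  by rewrite /fact_conv big_ord_recr /= subnn fact0 muln1.
have splitl : fact_conv m.+2 = (m.+1`! + \sum_(j < m.+1) j.+1`! * (m - j)`!)%N.
  by rewrite /fact_conv big_ord_recl /= fact0 mul1n subn0.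
(* (m+2) j! (m-j)! = j! (m+1-j)! + (j+1)! (m-j)!, summed over j *)
have scaled : (m.+2 * fact_conv m.+1 = \sum_(j < m.+1) j`! * (m.+1 - j)`! +
                 \sum_(j < m.+1) j.+1`! * (m - j)`!)%N.
  rewrite /fact_conv big_distrr -big_split /=; apply: eq_bigr => -[j lt_jm] _ /=.
  have -> : (m.+1 - j = (m - j).+1)%N by lia.
  rewrite !factS; have -> : (m.+2 = j.+1 + (m - j).+1)%N by lia.
  by ring.
lia.
Qed.

Definition genocchi_coef (k : nat) : int :=
  \sum_(1 <= l < k.+1) (-1) ^+ (k - 1)%N * ((l - 1)`!)%:Z * ((k - l)`!)%:Z.

Lemma genocchi_coefE k : genocchi_coef k = (-1) ^+ (k - 1)%N * (fact_conv k)%:R.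
Proof.
rewrite /genocchi_coef /fact_conv natr_sum mulr_sumr big_add1 /= big_mkord.
apply: eq_bigr => i _; rewrite natrM mulrA !natz subn1.
by congr (_ * Posz _`! * Posz _`!); case: k i => [|k] [i lt_ik] /=; lia.
Qed.

Lemma genocchi_coef0 : genocchi_coef 0 = 0.
Proof. by rewrite genocchi_coefE /fact_conv big_ord0 mulr0. Qed.

Lemma genocchi_coef_rec m :
  2 * genocchi_coef m.+1 + m.+1%:R * genocchi_coef m = 2 * ((-1) ^+ m * (m`!)%:R).
Proof.
case: m => [|m].
  by rewrite genocchi_coef0 mulr0 addr0 genocchi_coefE /fact_conv big_ord1.
rewrite !genocchi_coefE !subn1 /=.
have rec : 2 * (fact_conv m.+2)%:R =
           m.+2%:R * (fact_conv m.+1)%:R + 2 * (m.+1`!)%:R :> int.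
  by rewrite -!natrM -natrD fact_conv_rec.
have -> : 2 * ((-1) ^+ m.+1 * (fact_conv m.+2)%:R) =
          (-1) ^+ m.+1 * (2 * (fact_conv m.+2)%:R) :> int by ring.
by rewrite rec exprS; ring.
Qed.

Section Umbral.
Variables (R : nzRingType) (F : nat -> R).

Definition umbral (p : {poly R}) : R := \sum_(i < size p) p`_i * F i.

Lemma umbral_widen N (p : {poly R}) :
  (size p <= N)%N -> umbral p = \sum_(i < N) p`_i * F i.
Proof.
move=> le_pN; rewrite /umbral -(subnKC le_pN) big_split_ord /=.
by rewrite [X in _ = _ + X]big1 ?addr0 // => i _; rewrite nth_default ?mul0r ?leq_addr.
Qed.

Lemma umbral0 : umbral 0 = 0.
Proof. by rewrite /umbral size_poly0 big_ord0. Qed.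

Lemma umbralD p q : umbral (p + q) = umbral p + umbral q.
Proof.
rewrite !(@umbral_widen (maxn (size p) (size q))) ?size_polyD ?leq_maxl ?leq_maxr //.
by rewrite -big_split; apply: eq_bigr => i _; rewrite coefD mulrDl.
Qed.

Lemma umbralZ a p : umbral (a *: p) = a * umbral p.
Proof.
rewrite (@umbral_widen (size p)) ?size_scale_leq // /umbral mulr_sumr.
by apply: eq_bigr => i _; rewrite coefZ mulrA.
Qed.

Lemma umbral_sum I (r : seq I) (P : pred I) (G : I -> {poly R}) :
  umbral (\sum_(i <- r | P i) G i) = \sum_(i <- r | P i) umbral (G i).
Proof. exact: (big_morph umbral umbralD umbral0). Qed.

Lemma umbralXn n : umbral 'X^n = F n.
Proof.
rewrite /umbral size_polyXn big_ord_recr /= coefXn eqxx mul1r big1 ?add0r //.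
by move=> i _; rewrite coefXn ltn_eqF ?mul0r.
Qed.

Lemma umbral_XaddC1_exp n :
  umbral (('X + 1) ^+ n) = \sum_(i < n.+1) 'C(n, i)%:R * F i.
Proof.
rewrite exprD1n umbral_sum; apply: eq_bigr => i _.
by rewrite -scaler_nat umbralZ umbralXn.
Qed.

End Umbral.

Definition genocchi_rec (R : nzRingType) (G : nat -> R) (n : nat) : Prop :=
  \sum_(i < n.+1) 'C(n, i)%:R * G i + G n = 2 * (n == 1%N)%:R.

Section Stirling.
Variable S : nat -> nat -> int.
Hypothesis hS : is_stirling2 S.

Lemma stirling2_nn n : S n n = 1.
Proof.
have := congr1 (fun p : {poly int} => p`_n) (hS n).
rewrite coefXn eqxx coef_sum big_ord_recr /= coefZ coef_falling_ge // eqxx mulr1.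
rewrite big1 ?add0r => [<- //|i _].
by rewrite coefZ nth_default ?mulr0 // size_falling.
Qed.

Lemma genocchi_formulaE n :
  genocchi_formula S n = \sum_(k < n.+1) genocchi_coef k * S n k.
Proof.
rewrite -(big_mkord xpredT (fun k => genocchi_coef k * S n k)).
rewrite (big_ltn (ltn0Sn n)) genocchi_coef0 mul0r add0r.
by apply: eq_big_nat => k _; rewrite mulr_suml.
Qed.

Local Notation L := (umbral (genocchi_formula S)).

Lemma umbral_falling k : L (falling k) = genocchi_coef k.
Proof.
elim/ltn_ind: k => n IHn; have := congr1 L (hS n).
rewrite umbralXn umbral_sum genocchi_formulaE !big_ord_recr /=.
rewrite umbralZ stirling2_nn mulr1 mul1r.
have -> : \sum_(i < n) L (S n i *: falling i) = \sum_(i < n) genocchi_coef i * S n i.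
  by apply: eq_bigr => i _; rewrite umbralZ IHn // mulrC.
by move/addrI.
Qed.

Lemma umbral_shift_falling k :
  L (falling k \Po ('X + 1)) + L (falling k) = 2 * (falling k)`_1.
Proof.
case: k => [|m].
  rewrite /falling big_ord0 comp_polyC -(expr0 ('X : {poly int})) umbralXn.
  by rewrite genocchi_formulaE big_ord1 genocchi_coef0 mul0r coefXn.
rewrite falling_comp_XaddC1 umbralD umbralZ !umbral_falling coef1_falling.
by rewrite -genocchi_coef_rec; ring.
Qed.

Lemma genocchi_formula_rec n : genocchi_rec (genocchi_formula S) n.
Proof.
have shift_Xn : L (('X + 1) ^+ n) + L 'X^n = 2 * ('X^n : {poly int})`_1.
  rewrite -comp_Xn_poly hS rmorph_sum !umbral_sum coef_sum mulr_sumr -big_split.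
  apply: eq_bigr => k _ /=.
  by rewrite comp_polyZ !umbralZ coefZ -mulrDr umbral_shift_falling mulrCA.
by rewrite /genocchi_rec -umbral_XaddC1_exp -umbralXn shift_Xn coefXn eq_sym.
Qed.

End Stirling.

Lemma fps_mul_egf_fact (G : nat -> rat) n :
  (n`!)%:R * fps_mul exp_plus_one (egf G) n =
  \sum_(i < n.+1) 'C(n, i)%:R * G i + G n.
Proof.
have fact_neq0 m : (m`!)%:R != 0 :> rat by rewrite pnatr_eq0 -lt0n fact_gt0.
have term (i : 'I_n.+1) : (n`!)%:R * (exp_plus_one i * egf G (n - i)) =
    'C(n, n - i)%:R * G (n - i)%N + (val i == 0%N)%:R * G (n - i)%N *
      ((n`!)%:R / ((n - i)`!)%:R).
  have le_in : (i <= n)%N by rewrite -ltnS.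
  rewrite /exp_plus_one /egf bin_sub // -(bin_fact le_in) !natrM.
  by field; rewrite !fact_neq0.
rewrite /fps_mul mulr_sumr (eq_bigr _ (fun i _ => term i)) big_split /=.
congr (_ + _).
  rewrite (reindex_inj rev_ord_inj); apply: eq_bigr => -[i lt_in] _ /=.
  by rewrite subSS subKn // -ltnS.
rewrite big_ord_recl big1 => [|i _]; last by rewrite mul0r mul0r.
by rewrite subn0 mul1r addr0 mulfV // mulr1.
Qed.

Lemma is_genocchiP G : is_genocchi G <-> forall n, genocchi_rec G n.
Proof.
have two_x_fact n : (n`!)%:R * two_x n = 2 * (n == 1%N)%:R :> rat.
  by rewrite /two_x; case: eqP => [->|_]; rewrite ?mulr0 ?mulr1 ?mul1r.
split=> recG n.
  by rewrite /genocchi_rec -fps_mul_egf_fact recG two_x_fact.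
apply: (mulfI (_ : (n`!)%:R != 0)); first by rewrite pnatr_eq0 -lt0n fact_gt0.
by rewrite fps_mul_egf_fact two_x_fact recG.
Qed.

Lemma genocchi_rec_unique (R : numDomainType) (G G' : nat -> R) :
  (forall n, genocchi_rec G n) -> (forall n, genocchi_rec G' n) -> G =1 G'.
Proof.
move=> recG recG'; elim/ltn_ind => n IHn.
have := recG n; rewrite /genocchi_rec -(recG' n) !big_ord_recr /= binn.
under [X in X + _ + _ = _]eq_bigr => i _ do rewrite IHn //.
by rewrite !mul1r -!addrA => /addrI/eqP; rewrite -!mulr2n eqrMn2r => /eqP.
Qed.

Lemma genocchi_rec_intr (R : nzRingType) (G : nat -> int) n :
  genocchi_rec G n -> genocchi_rec (fun m => (G m)%:~R : R) n.
Proof.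
rewrite /genocchi_rec => /(congr1 (fun x : int => x%:~R : R)) /=.
rewrite rmorphD rmorph_sum rmorphM /= !rmorph_nat => <-.
by congr (_ + _); apply: eq_bigr => i _; rewrite rmorphM /= rmorph_nat.
Qed.

Theorem theorem1 (S : nat -> nat -> int) (hS : is_stirling2 S) :
  forall G : nat -> rat,
    is_genocchi G <-> (forall n : nat, G n = (genocchi_formula S n)%:~R).
Proof.
have rec_formula n : genocchi_rec (fun m => (genocchi_formula S m)%:~R : rat) n.
  exact/genocchi_rec_intr/genocchi_formula_rec.
move=> G; rewrite is_genocchiP; split=> [recG|eqG n].
  exact: genocchi_rec_unique.
rewrite /genocchi_rec eqG -(rec_formula n).
by congr (_ + _); apply: eq_bigr => i _; rewrite eqG.
Qed.
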